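(* For every $\beta\in B_n$, every entry of the matrix $\phi(\beta)$ is of the form $a\beta$ for some $a\in\mathbf{Z}[F_n]$.
   Context: The braid group $B_n$ ($n\ge2$) has generators $\sigma_1,\dots,\sigma_{n-1}$ with relations $\sigma_i\sigma_j=\sigma_j\sigma_i$ for $|i-j|>1$ and $\sigma_i\sigma_j\sigma_i=\sigma_j\sigma_i\sigma_j$ for $|i-j|=1$. Let $F_n$ be the free group on $g_1,\dots,g_n$. The semidirect product $F_n\rtimes B_n$ is the group generated by $F_n$ and $B_n$ subject to the additional relations $g_{i+1}\sigma_i=\sigma_i g_i$, $g_i\sigma_i=\sigma_i g_i g_{i+1}g_i^{-1}$, and $g_j\sigma_i=\sigma_i g_j$ for $j\notin\{i,i+1\}$; $\mathbf{Z}[F_n]\subset\mathbf{Z}[F_n\rtimes B_n]$ are the group rings. For $i=1,\dots,n-1$ let $R_i=\begin{bmatrix}0&g_i\\1&1-g_i\end{bmatrix}$. Let $\phi$ be the homomorphism from $B_n$ to the group of invertible $n\times n$ matrices over $\mathbf{Z}[F_n\rtimes B_n]$ (usual matrix multiplication) given by $\phi(\sigma_i)=\sigma_i\cdot\mathrm{diag}(I_{i-1},R_i,I_{n-i-1})$, where the scalar $\sigma_i$ multiplies every entry on the left. *)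

From HB Require Import structures.
From mathcomp Require Import all_boot all_order all_algebra.
Set Implicit Arguments. Unset Strict Implicit. Unset Printing Implicit Defensive.
Import GRing.Theory.
Local Open Scope ring_scope.

(* Conventions: we work in an arbitrary ring R containing
   elements g_1..g_n (with two-sided inverses ginv_i) and s_1..s_{n-1}
   (images of sigma_i, with two-sided inverses sinv_i) satisfying all the
   defining relations of F_n ⋊ B_n.  The universal such ring is
   Z[F_n ⋊ B_n]; all indices are 1-based as in the paper. *)

Section Defs.
Variable R : nzRingType.
Variable n : nat.
Variables (g ginv s sinv : nat -> R).

Definition semidirect_rels : Prop :=
  (forall i, (1 <= i <= n)%N -> g i * ginv i = 1 /\ ginv i * g i = 1) /\
  (forall i, (1 <= i < n)%N -> s i * sinv i = 1 /\ sinv i * s i = 1) /\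
  (forall i j, (1 <= i < n)%N -> (1 <= j < n)%N -> (i.+1 < j \/ j.+1 < i)%N ->
     s i * s j = s j * s i) /\
  (forall i j, (1 <= i < n)%N -> (1 <= j < n)%N -> (j = i.+1 \/ i = j.+1) ->
     s i * s j * s i = s j * s i * s j) /\
  (forall i, (1 <= i < n)%N ->
     g i.+1 * s i = s i * g i /\ g i * s i = s i * (g i * g i.+1 * ginv i)) /\
  (forall i j, (1 <= i < n)%N -> (1 <= j <= n)%N -> j <> i -> j <> i.+1 ->
     g j * s i = s i * g j).

(* The image of Z[F_n] in R: the subring generated by the g_i^{±1}. *)
Inductive inZF : R -> Prop :=
| inZF0 : inZF 0
| inZF1 : inZF 1
| inZFg i : (1 <= i <= n)%N -> inZF (g i)
| inZFginv i : (1 <= i <= n)%N -> inZF (ginv i)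
| inZFN a : inZF a -> inZF (- a)
| inZFD a b : inZF a -> inZF b -> inZF (a + b)
| inZFM a b : inZF a -> inZF b -> inZF (a * b).

(* phi(sigma_i) = sigma_i . diag(I_{i-1}, R_i, I_{n-i-1}),
   R_i = [[0, g_i], [1, 1 - g_i]]; rows/cols i, i+1 (1-based) are
   the 0-based indices i-1, i. *)
Definition phi_gen (i : nat) : 'M[R]_n :=
  \matrix_(j, k)
    (s i * (let j := nat_of_ord j in let k := nat_of_ord k in
            if (j == i.-1) && (k == i.-1) then 0
            else if (j == i.-1) && (k == i) then g i
            else if (j == i) && (k == i.-1) then 1
            else if (j == i) && (k == i) then 1 - g i
            else (j == k)%:R)).

(* A braid word: letters (i, true) = sigma_i, (i, false) = sigma_i^{-1}. *)
Definition braid_word_ok (w : seq (nat * bool)) : bool :=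
  all (fun l => (1 <= l.1 < n)%N) w.

Definition braid_val (w : seq (nat * bool)) : R :=
  foldr (fun l acc => (if l.2 then s l.1 else sinv l.1) * acc) 1 w.

(* PhiRel w M : M = phi(beta) for beta represented by w, phi being
   multiplicative with phi(sigma_i^{-1}) the (two-sided) inverse of
   phi(sigma_i). *)
Inductive PhiRel : seq (nat * bool) -> 'M[R]_n -> Prop :=
| PhiNil : PhiRel [::] 1%:M
| PhiPos i w M : PhiRel w M -> PhiRel ((i, true) :: w) (phi_gen i *m M)
| PhiNeg i w M N : N *m phi_gen i = 1%:M -> phi_gen i *m N = 1%:M ->
    PhiRel w M -> PhiRel ((i, false) :: w) (N *m M).

End Defs.

Arguments semidirect_rels : clear implicits.
Arguments inZF : clear implicits.
Arguments phi_gen : clear implicits.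
Arguments braid_word_ok : clear implicits.
Arguments braid_val : clear implicits.
Arguments PhiRel : clear implicits.

From HB Require Import structures.
From mathcomp Require Import all_boot all_order all_algebra zify.
Set Implicit Arguments. Unset Strict Implicit. Unset Printing Implicit Defensive.
Import GRing.Theory.
Local Open Scope ring_scope.

(* Write phi(sigma_i) = sigma_i D_i with D_i = diag(I, R_i, I) = [phi_coef g i].  Its entries
   lie in Z[F_n] sigma_i; the inverse N of phi(sigma_i) satisfies
   (N sigma_i) D_i = 1, and D_i^-1 has entries in Z[F_n] because
   R_i^-1 = [[(g_i - 1) g_i^-1, 1], [g_i^-1, 0]], so the entries of N lie in
   Z[F_n] sigma_i^-1.  The relations of F_n ⋊ B_n say that sigma_i^{±1}
   normalizes Z[F_n], hence multiplying a matrix with entries in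
   Z[F_n] sigma_i^{±1} by one with entries in Z[F_n] beta gives entries in
   Z[F_n] sigma_i^{±1} beta. *)

Lemma inv_intertwine (R : nzRingType) (c c' u y : R) :
  c * c' = 1 -> c' * c = 1 -> u * c = c * y -> c' * u = y * c'.
Proof.
move=> cc' c'c uc.
by rewrite -[c' * u]mulr1 -cc' mulrA -(mulrA c') uc mulrA c'c mul1r.
Qed.

Section ZFMultiples.
Variables (R : nzRingType) (n : nat) (g ginv : nat -> R).
Local Notation ZF := (inZF R n g ginv).

Definition ZF_multiple (b x : R) : Prop := exists a, ZF a /\ x = a * b.

Definition normalizes_ZF (c : R) : Prop :=
  forall x, ZF x -> exists y, ZF y /\ c * x = y * c.

Lemma ZF_nat (b : bool) : ZF b%:R.
Proof. by case: b; [exact: inZF1 | exact: inZF0]. Qed.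

Lemma ZF_multiple_sum (b : R) (I : Type) (r : seq I) (P : pred I) (F : I -> R) :
  (forall i, P i -> ZF_multiple b (F i)) ->
  ZF_multiple b (\sum_(i <- r | P i) F i).
Proof.
move=> HF; apply: big_ind => //.
- by exists 0; split; [exact: inZF0 | rewrite mul0r].
- move=> x y [a [Ha ->]] [a' [Ha' ->]].
  by exists (a + a'); split; [exact: inZFD | rewrite mulrDl].
Qed.

Lemma normalizes_ZF_gen (c : R) :
  (forall j, (1 <= j <= n)%N -> g j * ginv j = 1) ->
  (forall j, (1 <= j <= n)%N ->
     exists y y', [/\ ZF y, ZF y', y' * y = 1 & c * g j = y * c]) ->
  normalizes_ZF c.
Proof.
move=> gK gen x; elim.
- by exists 0; split; [exact: inZF0 | rewrite mulr0 mul0r].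
- by exists 1; split; [exact: inZF1 | rewrite mulr1 mul1r].
- by move=> j Hj; have [y [y' [Hy _ _ cg]]] := gen j Hj; exists y.
- move=> j Hj; have [y [y' [_ Hy' y'y cg]]] := gen j Hj.
  exists y'; split => //.
  by rewrite -[c * _]mul1r -y'y -mulrA (mulrA y) -cg -mulrA gK // mulr1.
- by move=> a _ [y [Hy e]]; exists (- y); split; [exact: inZFN | rewrite mulrN e mulNr].
- move=> a b _ [y [Hy e]] _ [z [Hz f]].
  by exists (y + z); split; [exact: inZFD | rewrite mulrDr e f mulrDl].
- move=> a b _ [y [Hy e]] _ [z [Hz f]].
  by exists (y * z); split; [exact: inZFM | rewrite mulrA e -mulrA f mulrA].
Qed.

Lemma ZF_multiple_mulmx (c b : R) (A B : 'M[R]_n) (j k : 'I_n) :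
  normalizes_ZF c ->
  (forall l, ZF_multiple c (A j l)) -> (forall l, ZF_multiple b (B l k)) ->
  ZF_multiple (c * b) ((A *m B) j k).
Proof.
move=> cZF HA HB; rewrite mxE; apply: ZF_multiple_sum => l _.
have [a [Ha ->]] := HA l; have [a' [Ha' ->]] := HB l.
have [y [Hy ca']] := cZF a' Ha'.
by exists (a * y); split; [exact: inZFM | rewrite -mulrA (mulrA c) ca' !mulrA].
Qed.

End ZFMultiples.

Section SemidirectRelations.
Variables (R : nzRingType) (n : nat) (g ginv s sinv : nat -> R).
Hypothesis rels : semidirect_rels R n g ginv s sinv.
Local Notation ZF := (inZF R n g ginv).
Local Notation normalizes_ZF := (normalizes_ZF n g ginv).

Lemma g_ginv j : (1 <= j <= n)%N -> g j * ginv j = 1.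
Proof. by case: rels => gK _ /gK []. Qed.

Lemma ginv_g j : (1 <= j <= n)%N -> ginv j * g j = 1.
Proof. by case: rels => gK _ /gK []. Qed.

Lemma s_sinv i : (1 <= i < n)%N -> s i * sinv i = 1.
Proof. by case: rels => _ [sK _] /sK []. Qed.

Lemma sinv_s i : (1 <= i < n)%N -> sinv i * s i = 1.
Proof. by case: rels => _ [sK _] /sK []. Qed.

Lemma gS_s i : (1 <= i < n)%N -> g i.+1 * s i = s i * g i.
Proof. by case: rels => _ [_ [_ [_ [gs _]]]] /gs []. Qed.

Lemma g_s i : (1 <= i < n)%N -> g i * s i = s i * (g i * g i.+1 * ginv i).
Proof. by case: rels => _ [_ [_ [_ [gs _]]]] /gs []. Qed.

Lemma g_s_far i j : (1 <= i < n)%N -> (1 <= j <= n)%N -> j != i -> j != i.+1 ->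
  g j * s i = s i * g j.
Proof.
by case: rels => _ [_ [_ [_ [_ gs]]]] Hi Hj /eqP ji /eqP jSi; apply: gs.
Qed.

Lemma s_normalizes i : (1 <= i < n)%N -> normalizes_ZF (s i).
Proof.
move=> Hi; have Hi1 : (1 <= i <= n)%N by lia.
have HSi : (1 <= i.+1 <= n)%N by lia.
apply: normalizes_ZF_gen => [|j Hj]; first exact: g_ginv.
case: (eqVneq j i) => [->|ji].
  exists (g i.+1), (ginv i.+1); split; [exact: inZFg | exact: inZFginv | | ].
  - exact: ginv_g.
  - by rewrite gS_s.
case: (eqVneq j i.+1) => [->|jSi]; last first.
  exists (g j), (ginv j); split; [exact: inZFg | exact: inZFginv | exact: ginv_g | ].
  by rewrite g_s_far.
exists (ginv i.+1 * g i * g i.+1), (ginv i.+1 * ginv i * g i.+1); split.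
- by apply: inZFM; [apply: inZFM|]; [exact: inZFginv | exact: inZFg | exact: inZFg].
- by apply: inZFM; [apply: inZFM|]; [exact: inZFginv | exact: inZFginv | exact: inZFg].
- rewrite -!mulrA (mulrA (g i.+1)) g_ginv // mul1r.
  by rewrite (mulrA (ginv i)) ginv_g // mul1r ginv_g.
- rewrite -!mulrA gS_s // (mulrA (g i)) g_s // -!mulrA ginv_g // mulr1.
  by rewrite !mulrA -(mulrA _ (s i) (g i)) -gS_s // mulrA ginv_g // mul1r.
Qed.

Lemma sinv_normalizes i : (1 <= i < n)%N -> normalizes_ZF (sinv i).
Proof.
move=> Hi; have Hi1 : (1 <= i <= n)%N by lia.
have HSi : (1 <= i.+1 <= n)%N by lia.
have intertwine := inv_intertwine (s_sinv Hi) (sinv_s Hi).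
apply: normalizes_ZF_gen => [|j Hj]; first exact: g_ginv.
case: (eqVneq j i) => [->|ji].
  exists (g i * g i.+1 * ginv i), (g i * ginv i.+1 * ginv i); split.
  - by apply: inZFM; [apply: inZFM|]; [exact: inZFg | exact: inZFg | exact: inZFginv].
  - by apply: inZFM; [apply: inZFM|]; [exact: inZFg | exact: inZFginv | exact: inZFginv].
  - rewrite -!mulrA (mulrA (ginv i)) ginv_g // mul1r.
    by rewrite (mulrA (ginv i.+1)) ginv_g // mul1r g_ginv.
  - by apply: intertwine; rewrite g_s.
case: (eqVneq j i.+1) => [->|jSi].
  exists (g i), (ginv i); split; [exact: inZFg | exact: inZFginv | exact: ginv_g | ].
  by apply: intertwine; rewrite gS_s.
exists (g j), (ginv j); split; [exact: inZFg | exact: inZFginv | exact: ginv_g | ].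
by apply: intertwine; rewrite g_s_far.
Qed.

End SemidirectRelations.

Definition phi_coef (R : nzRingType) (g : nat -> R) (i j k : nat) : R :=
  if (j == i.-1) && (k == i.-1) then 0
  else if (j == i.-1) && (k == i) then g i
  else if (j == i) && (k == i.-1) then 1
  else if (j == i) && (k == i) then 1 - g i
  else (j == k)%:R.

Lemma phi_genE (R : nzRingType) n (g s : nat -> R) i (j k : 'I_n) :
  phi_gen R n g s i j k = s i * phi_coef g i j k.
Proof. by rewrite mxE. Qed.

Lemma phi_coef_block (R : nzRingType) (g : nat -> R) i : (1 <= i)%N ->
  [/\ phi_coef g i i.-1 i.-1 = 0, phi_coef g i i i.-1 = 1,
      phi_coef g i i.-1 i = g i, phi_coef g i i i = 1 - g i &
      forall k, k != i.-1 -> k != i ->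
        phi_coef g i i.-1 k = 0 /\ phi_coef g i i k = 0].
Proof.
move=> i1; have iP : (i == i.-1) = false by apply/negbTE; lia.
have Pi : (i.-1 == i) = false by apply/negbTE; lia.
rewrite /phi_coef !eqxx iP Pi /=; split => // k kP ki.
by rewrite (negbTE kP) (negbTE ki) /= eq_sym (negbTE kP) eq_sym (negbTE ki).
Qed.

(* Only rows [i.-1] and [i] of [D_i] differ from the identity. *)
Lemma sum_phi_coef (R : nzRingType) n (g : nat -> R) i (r : 'I_n -> R)
    (a b k : 'I_n) :
  (1 <= i)%N -> a = i.-1 :> nat -> b = i :> nat ->
  \sum_l r l * phi_coef g i l k =
    r a * phi_coef g i a k + r b * phi_coef g i b k
    + (if (k != a) && (k != b) then r k else 0).
Proof.
move=> i1 aE bE.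
have ba : b != a by apply/eqP => /(congr1 val) /=; rewrite aE bE; lia.
rewrite (bigD1 a) // (bigD1 b) //= addrA; congr (_ + _).
rewrite (eq_bigr (fun l => r l * (l == k)%:R)); last first.
  move=> l /andP[la lb].
  have lP : (nat_of_ord l == i.-1) = false by rewrite -aE; exact: negbTE.
  have li : (nat_of_ord l == i) = false by rewrite -bE; exact: negbTE.
  by rewrite /phi_coef lP li.
case: ifP => [/andP[ka kb]|kab].
  rewrite (bigD1 k) /=; last by rewrite ka kb.
  by rewrite eqxx mulr1 big1 ?addr0 // => l /andP[_ /negbTE ->]; rewrite mulr0.
rewrite big1 // => l /andP[la lb].
by case: (eqVneq l k) => [lk|]; [move: kab; rewrite -lk la lb | rewrite mulr0].
Qed.

Section PhiGenerators.
Variables (R : nzRingType) (n : nat) (g ginv s sinv : nat -> R).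
Hypothesis rels : semidirect_rels R n g ginv s sinv.
Local Notation ZF := (inZF R n g ginv).

Lemma phi_coef_ZF i j k : (1 <= i <= n)%N -> ZF (phi_coef g i j k).
Proof.
move=> Hi; rewrite /phi_coef.
case: ifP => _; first exact: inZF0.
case: ifP => _; first exact: inZFg.
case: ifP => _; first exact: inZF1.
case: ifP => _; last exact: ZF_nat.
by apply: inZFD; [exact: inZF1 | apply: inZFN; exact: inZFg].
Qed.

(* [D_i] is invertible over Z[F_n]. *)
Lemma row_phi_coef_ZF i (r : 'I_n -> R) : (1 <= i < n)%N ->
  (forall k : 'I_n, ZF (\sum_l r l * phi_coef g i l k)) -> forall l, ZF (r l).
Proof.
move=> Hi rD; have i1 : (1 <= i)%N by lia.
have Hi1 : (1 <= i <= n)%N by lia.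
have aP : (i.-1 < n)%N by lia.
have bP : (i < n)%N by lia.
pose a := Ordinal aP; pose b := Ordinal bP.
have sumE k := @sum_phi_coef R n g i r a b k i1 erefl erefl.
have [c_aa c_ba c_ab c_bb c_far] := phi_coef_block g i1.
have rb : ZF (r b).
  by have := rD a; rewrite sumE /= c_aa c_ba eqxx /= mulr0 mulr1 add0r addr0.
move=> l; case: (eqVneq l b) => [-> //|lb].
case: (eqVneq l a) => [->|la].
  have := rD b; rewrite sumE /= c_ab c_bb eqxx andbF addr0 => rDb.
  have -> : r a = (r a * g i + r b * (1 - g i) - r b * (1 - g i)) * ginv i.
    by rewrite addrK -mulrA (g_ginv rels) // mulr1.
  apply: inZFM; last exact: inZFginv.
  apply: inZFD => //; apply: inZFN; apply: inZFM => //.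
  by apply: inZFD; [exact: inZF1 | apply: inZFN; exact: inZFg].
have [c_al c_bl] := c_far (nat_of_ord l) la lb.
by have := rD l; rewrite sumE /= c_al c_bl la lb /= !mulr0 !add0r.
Qed.

Lemma phi_gen_ZF_multiple i (j l : 'I_n) : (1 <= i < n)%N ->
  ZF_multiple n g ginv (s i) (phi_gen R n g s i j l).
Proof.
move=> Hi; have Hi1 : (1 <= i <= n)%N by lia.
have [y [Hy e]] := s_normalizes rels Hi (phi_coef_ZF j l Hi1).
by exists y; split; rewrite // phi_genE.
Qed.

Lemma inv_phi_gen_ZF_multiple i (N : 'M[R]_n) (j l : 'I_n) : (1 <= i < n)%N ->
  N *m phi_gen R n g s i = 1%:M -> ZF_multiple n g ginv (sinv i) (N j l).
Proof.
move=> Hi NK; exists (N j l * s i).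
split; last by rewrite -mulrA (s_sinv rels) // mulr1.
apply: (@row_phi_coef_ZF i (fun l => N j l * s i) Hi) => k.
have := congr1 (fun A : 'M[R]_n => A j k) NK; rewrite !mxE => NKjk.
have -> : \sum_l N j l * s i * phi_coef g i l k = (j == k)%:R.
  by rewrite -NKjk; apply: eq_bigr => l' _; rewrite phi_genE mulrA.
exact: ZF_nat.
Qed.

End PhiGenerators.

Theorem lemma3p2 (R : nzRingType) (n : nat) (g ginv s sinv : nat -> R) :
  (2 <= n)%N ->
  semidirect_rels R n g ginv s sinv ->
  forall (w : seq (nat * bool)) (M : 'M[R]_n),
    braid_word_ok n w ->
    PhiRel R n g s w M ->
    forall j k : 'I_n,
      exists a : R, inZF R n g ginv a /\ M j k = a * braid_val R s sinv w.
Proof.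
move=> _ rels w M ok HP; elim: HP ok => {w M} [|i w M _ IH|i w M N NK _ _ IH] /=.
- move=> _ j k; exists (j == k)%:R; split; first exact: ZF_nat.
  by rewrite mxE mulr1.
- move=> /andP[Hi ok] j k.
  apply: (ZF_multiple_mulmx (s_normalizes rels Hi)) => l.
  + exact: (phi_gen_ZF_multiple rels).
  + exact: IH ok l k.
- move=> /andP[Hi ok] j k.
  apply: (ZF_multiple_mulmx (sinv_normalizes rels Hi)) => l.
  + exact: (inv_phi_gen_ZF_multiple rels).
  + exact: IH ok l k.
Qed.
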